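(* Let $\gamma\ge0$ be an integer. Then $$\omega_m^2C_{\gamma\gamma\gamma\gamma}-2\omega_\gamma^2C_{\gamma\gamma mm}\neq0\quad\text{for all integers } m\ge2\gamma+1,$$ and $D_{\gamma n}\ne0$ for all $n\in\{0,1,\dots,\gamma-1\}$, where $$D_{\gamma n}=\left[\omega_n^2C_{\gamma\gamma\gamma\gamma}-2\omega_\gamma^2C_{\gamma\gamma nn}\right]\left[\omega_{2\gamma-n}^2C_{\gamma\gamma\gamma\gamma}-2\omega_\gamma^2C_{\gamma,\gamma,2\gamma-n,2\gamma-n}\right]-\left[\omega_\gamma^2C_{\gamma,2\gamma-n,\gamma,n}\right]^2.$$
   Context: $\omega_n=n+1$ and $C_{ijkm}=\frac{2}{\pi}\int_{-1}^1U_i(y)U_j(y)U_k(y)U_m(y)\sqrt{1-y^2}\,dy$, where $U_n$ is the Chebyshev polynomial of the second kind of degree $n$ (equivalently $C_{ijkm}=\frac2\pi\int_0^\pi e_ie_je_ke_m\sin^2x\,dx$ with $e_n(x)=U_n(\cos x)$). *)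

From Stdlib Require Import Reals.
From Coquelicot Require Import Coquelicot.
Open Scope R_scope.

Fixpoint chebU (n : nat) (y : R) : R :=
  match n with
  | O => 1
  | S p => match p with
           | O => 2 * y
           | S q => 2 * y * chebU p y - chebU q y
           end
  end.

Definition omega (n : nat) : R := INR n + 1.

Definition Cc (i j k m : nat) : R :=
  2 / PI * RInt (fun y => chebU i y * chebU j y * chebU k y * chebU m y
                          * sqrt (1 - y ^ 2)) (-1) 1.

Definition Dgn (g n : nat) : R :=
  (omega n ^ 2 * Cc g g g g - 2 * omega g ^ 2 * Cc g g n n)
  * (omega (2 * g - n) ^ 2 * Cc g g g g
     - 2 * omega g ^ 2 * Cc g g (2 * g - n) (2 * g - n))
  - (omega g ^ 2 * Cc g (2 * g - n) g n) ^ 2.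

(** Substituting [y = cos x] turns [C_ijkm] into [(2/pi) int_0^pi e_i e_j e_k e_m sin^2 x dx],
    and [e_n(x) sin x = sin ((n+1) x)].  By the linearization
    [U_i U_(i+d) = U_d + U_(d+2) + ... + U_(d+2i)], both [e_i e_(i+d) sin x] and
    [e_j e_(j+d) sin x] are sums of the orthogonal functions [sin ((d+2k+1) x)],
    with [i+1] and [j+1] terms respectively, so [C_(i,i+d,j,j+d) = min(i,j) + 1].
    All coefficients of the statement have this shape, and the two quantities
    become explicit polynomials in [a = omega_gamma] and [b = omega_n]:
    [a (omega_m^2 - 2 a^2)] with [omega_m >= 2a], and
    [D_(gamma n) = a^2 b (b - a)^2 (b - 4a)] with [0 < b < a]. *)
From Stdlib Require Import Reals Lra Lia.
From Coquelicot Require Import Coquelicot.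
Open Scope R_scope.

Lemma nat_ind2 (P : nat -> Prop) :
  P 0%nat -> P 1%nat -> (forall n, P n -> P (S n) -> P (S (S n))) -> forall n, P n.
Proof.
  intros H0 H1 HS n.
  enough (H : P n /\ P (S n)) by apply H.
  induction n as [|n [Hn HSn]]; auto.
Qed.

Lemma chebU_SS n y : chebU (S (S n)) y = 2 * y * chebU (S n) y - chebU n y.
Proof. reflexivity. Qed.

Lemma continuous_chebU n y : continuous (chebU n) y.
Proof.
  assert (Hlin : continuous (fun y => 2 * y) y)
    by (apply (ex_derive_continuous (fun y => 2 * y)); auto_derive; auto).
  induction n as [| |n IHn IHSn] using nat_ind2.
  - apply continuous_const.
  - exact Hlin.
  - apply (continuous_minus (fun y => 2 * y * chebU (S n) y) (chebU n)); auto.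
    apply (continuous_mult (fun y => 2 * y) (chebU (S n))); auto.
Qed.

Lemma chebU_cos_mul_sin n x : chebU n (cos x) * sin x = sin (INR (S n) * x).
Proof.
  induction n as [| |n IHn IHSn] using nat_ind2.
  - simpl. rewrite !Rmult_1_l. reflexivity.
  - simpl. replace ((1 + 1) * x) with (x + x) by ring. rewrite sin_plus. ring.
  - rewrite chebU_SS.
    replace ((2 * cos x * chebU (S n) (cos x) - chebU n (cos x)) * sin x)
      with (2 * cos x * (chebU (S n) (cos x) * sin x) - chebU n (cos x) * sin x) by ring.
    rewrite IHn, IHSn.
    replace (INR (S (S (S n))) * x) with (INR (S (S n)) * x + x) by (rewrite !S_INR; ring).
    replace (INR (S n) * x) with (INR (S (S n)) * x - x) by (rewrite !S_INR; ring).
    rewrite sin_plus, sin_minus. ring.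
Qed.

Lemma chebU_mul_linearization i d y :
  chebU i y * chebU (i + d) y = sum_f_R0 (fun k => chebU (d + 2 * k) y) i.
Proof.
  revert d.
  induction i as [| |i IHi IHSi] using nat_ind2; intros d.
  - simpl. rewrite Nat.add_0_r. ring.
  - simpl sum_f_R0. rewrite Nat.add_0_r. replace (d + 2)%nat with (S (S d)) by lia.
    rewrite chebU_SS. change (chebU 1 y) with (2 * y). change (1 + d)%nat with (S d). ring.
  - assert (Hrec : 2 * y * chebU (S (S (i + d))) y
                   = chebU (S i + (d + 2)) y + chebU (S i + d) y).
    { replace (S i + (d + 2))%nat with (S (S (S (i + d)))) by lia.
      replace (S i + d)%nat with (S (i + d)) by lia.
      rewrite (chebU_SS (S (i + d))). ring. }
    rewrite chebU_SS. replace (S (S i) + d)%nat with (S (S (i + d))) by lia.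
    transitivity (chebU (S i) y * (2 * y * chebU (S (S (i + d))) y)
                  - chebU i y * chebU (i + (d + 2)) y).
    { replace (i + (d + 2))%nat with (S (S (i + d))) by lia. ring. }
    rewrite Hrec, Rmult_plus_distr_l, !IHSi, IHi, !tech5.
    replace (d + 2 + 2 * S i)%nat with (d + 2 * S (S i))%nat by lia.
    ring.
Qed.

Lemma sin_IZR_mul_PI (z : Z) : sin (IZR z * PI) = 0.
Proof. apply sin_eq_0_1. exists z. reflexivity. Qed.

Lemma sin_INR_mul_PI (n : nat) : sin (INR n * PI) = 0.
Proof. rewrite INR_IZR_INZ. apply sin_IZR_mul_PI. Qed.

Lemma is_RInt_sin_mul_sin a b :
  is_RInt (fun x => sin (INR (S a) * x) * sin (INR (S b) * x)) 0 PI
          (if Nat.eqb a b then PI / 2 else 0).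
Proof.
  set (p := INR (S a)). set (q := INR (S b)).
  assert (Hp : 0 < p) by (apply lt_0_INR; lia).
  assert (Hq : 0 < q) by (apply lt_0_INR; lia).
  destruct (Nat.eqb_spec a b) as [<-|Hab].
  - fold p in q. subst q.
    set (F := fun x => x / 2 - sin (2 * p * x) / (4 * p)).
    replace (PI / 2) with (minus (F PI) (F 0)).
    2:{ unfold F, minus, plus, opp; simpl.
        replace (2 * p * PI) with (INR (2 * S a) * PI) by (unfold p; rewrite mult_INR; simpl; ring).
        rewrite sin_INR_mul_PI, Rmult_0_r, sin_0. field. lra. }
    apply (is_RInt_derive (V := R_CompleteNormedModule) F).
    + intros x _. unfold F. auto_derive; [auto|].
      replace (2 * p * x) with (p * x + p * x) by ring. rewrite cos_plus.
      pose proof (sin2_cos2 (p * x)) as Hpyth. unfold Rsqr in Hpyth. field_simplify; [|lra]. nra.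
    + intros x _. apply (ex_derive_continuous (fun x => sin (p * x) * sin (p * x))). auto_derive. auto.
  - assert (Hpq : p - q <> 0).
    { unfold p, q. rewrite !S_INR. intro H. apply Hab. apply INR_eq. lra. }
    set (F := fun x => sin ((p - q) * x) / (2 * (p - q)) - sin ((p + q) * x) / (2 * (p + q))).
    assert (Hv : minus (F PI) (F 0) = 0).
    { unfold F, minus, plus, opp; simpl.
      replace ((p - q) * PI) with (IZR (Z.of_nat (S a) - Z.of_nat (S b)) * PI)
        by (unfold p, q; rewrite minus_IZR, <- !INR_IZR_INZ; ring).
      replace ((p + q) * PI) with (INR (S a + S b) * PI) by (unfold p, q; rewrite plus_INR; ring).
      rewrite sin_IZR_mul_PI, sin_INR_mul_PI, !Rmult_0_r, sin_0. field. lra. }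
    enough (HF : is_RInt (fun x => sin (p * x) * sin (q * x)) 0 PI (minus (F PI) (F 0)))
      by (rewrite Hv in HF; exact HF).
    apply (is_RInt_derive (V := R_CompleteNormedModule) F).
    + intros x _. unfold F. auto_derive; [auto|].
      replace ((p - q) * x) with (p * x - q * x) by ring.
      replace ((p + q) * x) with (p * x + q * x) by ring.
      rewrite cos_plus, cos_minus. field. lra.
    + intros x _. apply (ex_derive_continuous (fun x => sin (p * x) * sin (q * x))). auto_derive. auto.
Qed.

Lemma is_RInt_Rplus (f g : R -> R) a b u v w :
  is_RInt f a b u -> is_RInt g a b v -> u + v = w -> is_RInt (fun x => f x + g x) a b w.
Proof. intros Hf Hg <-. exact (is_RInt_plus f g a b u v Hf Hg). Qed.

Lemma is_RInt_Rext (f g : R -> R) a b l :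
  (forall x, f x = g x) -> is_RInt f a b l -> is_RInt g a b l.
Proof. intros Hfg. apply is_RInt_ext. intros x _. apply Hfg. Qed.

Definition sin_chain (c A : nat) (x : R) : R :=
  sum_f_R0 (fun k => sin (INR (S (c + 2 * k)) * x)) A.

Lemma is_RInt_sin_mul_sin_chain c k B :
  is_RInt (fun x => sin (INR (S (c + 2 * k)) * x) * sin_chain c B x) 0 PI
          (if Nat.leb k B then PI / 2 else 0).
Proof.
  induction B as [|B IHB].
  - replace (Nat.leb k 0) with (Nat.eqb (c + 2 * k) (c + 2 * 0))
      by (destruct (Nat.eqb_spec (c + 2 * k) (c + 2 * 0)); destruct (Nat.leb_spec k 0); lia).
    apply is_RInt_sin_mul_sin.
  - apply (is_RInt_Rext (fun x => sin (INR (S (c + 2 * k)) * x) * sin_chain c B x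
                                 + sin (INR (S (c + 2 * k)) * x) * sin (INR (S (c + 2 * S B)) * x))).
    { intros x. unfold sin_chain. rewrite tech5. ring. }
    eapply is_RInt_Rplus; [exact IHB | apply is_RInt_sin_mul_sin |].
    destruct (Nat.eqb_spec (c + 2 * k) (c + 2 * S B)); destruct (Nat.leb_spec k B);
      destruct (Nat.leb_spec k (S B)); try lia; ring.
Qed.

Lemma is_RInt_sin_chain_mul c A B :
  is_RInt (fun x => sin_chain c A x * sin_chain c B x) 0 PI (PI / 2 * INR (S (Nat.min A B))).
Proof.
  induction A as [|A IHA].
  - replace (PI / 2 * INR (S (Nat.min 0 B))) with (if Nat.leb 0 B then PI / 2 else 0)
      by (simpl; ring).
    apply (is_RInt_sin_mul_sin_chain c 0 B).
  - apply (is_RInt_Rext (fun x => sin_chain c A x * sin_chain c B x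
                                 + sin (INR (S (c + 2 * S A)) * x) * sin_chain c B x)).
    { intros x. unfold sin_chain. rewrite tech5. ring. }
    eapply is_RInt_Rplus; [exact IHA | apply is_RInt_sin_mul_sin_chain |].
    destruct (Nat.leb_spec (S A) B).
    + rewrite (Nat.min_l (S A) B), (Nat.min_l A B), (S_INR (S A)) by lia. ring.
    + rewrite (Nat.min_r (S A) B), (Nat.min_r A B) by lia. ring.
Qed.

Lemma chebU_chain_cos_mul_sin c A x :
  sum_f_R0 (fun k => chebU (c + 2 * k) (cos x)) A * sin x = sin_chain c A x.
Proof.
  unfold sin_chain. induction A as [|A IHA].
  - apply chebU_cos_mul_sin.
  - rewrite !tech5, Rmult_plus_distr_r, IHA, chebU_cos_mul_sin. reflexivity.
Qed.

Lemma RInt_sqrt_weight_cos_subst (P : R -> R) v :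
  (forall y, continuous P y) ->
  is_RInt (fun x => P (cos x) * sin x * sin x) 0 PI v ->
  RInt (fun y => P y * sqrt (1 - y ^ 2)) (-1) 1 = v.
Proof.
  intros HP Hv.
  set (f := fun y => P y * sqrt (1 - y ^ 2)).
  assert (Hf : forall y, continuous f y).
  { intros y. apply (continuous_mult P (fun y => sqrt (1 - y ^ 2))); auto.
    apply continuous_sqrt_comp. apply (ex_derive_continuous (fun y => 1 - y ^ 2)).
    auto_derive. auto. }
  assert (Hex : ex_RInt f 1 (-1))
    by (apply (ex_RInt_continuous (V := R_CompleteNormedModule)); auto).
  change (RInt f (-1) 1 = v).
  rewrite <- (opp_RInt_swap (V := R_CompleteNormedModule) f 1 (-1) Hex).
  rewrite <- cos_0 at 1. rewrite <- cos_PI.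
  rewrite <- (RInt_comp f cos (fun x => - sin x) 0 PI).
  - rewrite (is_RInt_unique _ 0 PI (- v)); [unfold opp; simpl; ring|].
    apply (is_RInt_ext (fun x => opp (P (cos x) * sin x * sin x))).
    + intros x Hx. rewrite Rmin_left, Rmax_right in Hx by (pose proof PI_RGT_0; lra).
      assert (Hsin : 0 < sin x) by (apply sin_gt_0; lra).
      unfold f, opp, scal; simpl; unfold mult; simpl.
      replace (1 - cos x * (cos x * 1)) with (Rsqr (sin x))
        by (rewrite sin2; unfold Rsqr; ring).
      rewrite sqrt_Rsqr by lra. ring.
    + apply (is_RInt_opp (V := R_NormedModule)). exact Hv.
  - intros x _. auto.
  - intros x _. split.
    + auto_derive; auto. ring.
    + apply (ex_derive_continuous (fun x => - sin x)). auto_derive. auto.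
Qed.

Lemma Cc_shifted_pairs i d j : Cc i (i + d) j (j + d) = INR (Nat.min i j) + 1.
Proof.
  unfold Cc.
  rewrite (RInt_sqrt_weight_cos_subst _ (PI / 2 * INR (S (Nat.min i j)))).
  - rewrite S_INR. field. apply PI_neq0.
  - intros y.
    repeat apply (continuous_mult (K := R_AbsRing)); apply continuous_chebU.
  - apply (is_RInt_Rext (fun x => sin_chain d i x * sin_chain d j x));
      [|apply is_RInt_sin_chain_mul].
    intros x.
    rewrite <- !chebU_chain_cos_mul_sin, <- !chebU_mul_linearization. ring.
Qed.

Lemma Cc_comm_last i j k m : Cc i j k m = Cc i j m k.
Proof.
  unfold Cc. f_equal. apply RInt_ext. intros y _.
  apply (f_equal (fun t => t * sqrt (1 - y ^ 2))). ring.
Qed.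

Lemma Cc_diag_pairs i j : Cc i i j j = INR (Nat.min i j) + 1.
Proof. rewrite <- (Cc_shifted_pairs i 0 j), !Nat.add_0_r. reflexivity. Qed.

Lemma diag_combination_eq g m : (g <= m)%nat ->
  omega m ^ 2 * Cc g g g g - 2 * omega g ^ 2 * Cc g g m m
  = omega g * (omega m ^ 2 - 2 * omega g ^ 2).
Proof.
  intros Hgm.
  rewrite !Cc_diag_pairs, Nat.min_id, Nat.min_l by exact Hgm.
  unfold omega. ring.
Qed.

Lemma Dgn_eq g n : (n <= g)%nat ->
  Dgn g n = omega g ^ 2 * omega n * (omega n - omega g) ^ 2 * (omega n - 4 * omega g).
Proof.
  intros Hng.
  assert (Hcross : Cc g (2 * g - n) g n = INR n + 1).
  { rewrite Cc_comm_last.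
    replace (2 * g - n)%nat with (g + (g - n))%nat by lia.
    rewrite <- (Nat.sub_add n g Hng) at 4.
    rewrite (Nat.add_comm (g - n) n), Cc_shifted_pairs, Nat.min_r by exact Hng. reflexivity. }
  unfold Dgn. rewrite Hcross, !Cc_diag_pairs, Nat.min_id, Nat.min_r, Nat.min_l by lia.
  unfold omega. rewrite minus_INR, mult_INR by lia. simpl (INR 2). ring.
Qed.

Lemma omega_gt0 n : 0 < omega n.
Proof. unfold omega. pose proof (pos_INR n). lra. Qed.

Theorem proposition7p2 (g : nat) :
  (forall m : nat, (2 * g + 1 <= m)%nat ->
     omega m ^ 2 * Cc g g g g - 2 * omega g ^ 2 * Cc g g m m <> 0)
  /\ (forall n : nat, (n < g)%nat -> Dgn g n <> 0).
Proof.
  pose proof (omega_gt0 g) as Hg.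
  split.
  - intros m Hm.
    rewrite diag_combination_eq by lia.
    assert (Hmg : 2 * omega g <= omega m).
    { unfold omega. apply le_INR in Hm. rewrite plus_INR, mult_INR in Hm. simpl in Hm. lra. }
    apply Rmult_integral_contrapositive_currified; nra.
  - intros n Hn.
    rewrite Dgn_eq by lia.
    pose proof (omega_gt0 n) as Hn0.
    assert (Hng : omega n < omega g) by (unfold omega; apply lt_INR in Hn; lra).
    repeat apply Rmult_integral_contrapositive_currified; try apply pow_nonzero; lra.
Qed.
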